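(* For every positive integer $r$, with $c_r=2^{r+1}-2$, $$S_r^*S_r=2^{r-2}\Big[J_{c_r,c_r}+I_{c_r/2}\otimes\begin{pmatrix}1&-1\\-1&1\end{pmatrix}\Big],$$ where $J_{x,y}$ denotes the $x\times y$ matrix all of whose entries equal $1$.
   Context: Define $\{0,1\}$-matrices $S_r$ recursively. Let $S_1=I_2$. For $r\ge1$ let $F_r=I_{2^r-1}\otimes\begin{pmatrix}0&1\\1&0\end{pmatrix}$, and let $1_r$, $0_r$ denote the $2^r\times1$ all-ones and all-zeros column vectors. For $r\ge2$ set $S_r=\big(B_r^{(i)}\ B_r^{(ii)}\ B_r^{(iii)}\big)$ (horizontal concatenation) with $$B_r^{(i)}=\begin{pmatrix}1_{r-1}&0_{r-1}\\0_{r-1}&1_{r-1}\end{pmatrix},\quad B_r^{(ii)}=\begin{pmatrix}S_{r-1}\\S_{r-1}\end{pmatrix},\quad B_r^{(iii)}=\begin{pmatrix}S_{r-1}\\S_{r-1}F_{r-1}\end{pmatrix}.$$ Then $S_r$ is a $2^r\times c_r$ matrix. *)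

From HB Require Import structures.
From mathcomp Require Import all_boot all_order all_algebra.
From mathcomp Require Export mxtens.
From mathcomp Require Import zify.
Set Implicit Arguments. Unset Strict Implicit. Unset Printing Implicit Defensive.
Import Order.TTheory GRing.Theory Num.Theory.
Local Open Scope ring_scope.

Definition c (r : nat) : nat := (2 ^ r.+1 - 2)%N.

Lemma cF_eq (r : nat) : ((2 ^ r - 1) * 2 = c r)%N.
Proof. by rewrite /c mulnBl mul1n expnS mulnC. Qed.

Lemma cS_eq (r : nat) : ((1 + 1) + (c r + c r) = c r.+1)%N.
Proof.
rewrite /c !expnS; have h : (2 <= 2 * 2 ^ r)%N.
  by rewrite -[X in (X <= _)%N]muln1 leq_mul2l expn_gt0.
set x := (2 ^ r)%N in h *; lia.
Qed.

Lemma rowS_eq (r : nat) : (2 ^ r + 2 ^ r = 2 ^ r.+1)%N.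
Proof. by rewrite expnS mul2n addnn. Qed.

Lemma chalf_eq (r : nat) : ((c r)./2 * 2 = c r)%N.
Proof.
rewrite /c expnS; set x := (2 ^ r)%N; lia.
Qed.

Lemma c1_eq : (2 = c 1)%N. Proof. by []. Qed.

Section Defs.
Variable R : numFieldType.

Definition swap2 : 'M[R]_2 := \matrix_(i < 2, j < 2) (if i == j then 0 else 1).

Definition Fmx (r : nat) : 'M[R]_(c r) :=
  castmx (cF_eq r, cF_eq r) ((1%:M : 'M[R]_(2 ^ r - 1)) *t swap2).

Definition ones (r : nat) : 'cV[R]_(2 ^ r) := const_mx 1.

(* S_r, a 2^r x c_r {0,1}-matrix; S_0 is an irrelevant placeholder. *)
Fixpoint Smx (r : nat) : 'M[R]_(2 ^ r, c r) :=
  match r return 'M[R]_(2 ^ r, c r) with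
  | 0 => 0
  | r1.+1 =>
    match r1 return 'M[R]_(2 ^ r1, c r1) -> 'M[R]_(2 ^ r1.+1, c r1.+1) with
    | 0 => fun _ => castmx (erefl _, c1_eq) (1%:M : 'M[R]_2)
    | (_.+1) as q => fun S' =>
      castmx (rowS_eq q, cS_eq q)
        (row_mx
           (block_mx (ones q) 0 0 (ones q))
           (row_mx (col_mx S' S') (col_mx S' (S' *m Fmx q))))
    end (Smx r1)
  end.

Definition Jmx (n : nat) : 'M[R]_n := const_mx 1.

Definition Pmx : 'M[R]_2 := \matrix_(i < 2, j < 2) (if i == j then 1 else -1).

End Defs.

From mathcomp Require Import all_boot all_order all_algebra.
From mathcomp Require Import mxtens zify ring.
Set Implicit Arguments. Unset Strict Implicit. Unset Printing Implicit Defensive.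
Import GRing.Theory Num.Theory.
Local Open Scope ring_scope.

(* Write S_{r+1} = (A | B | C) and G = S_r^T S_r.  Blockwise, A^T A = 2^r I_2,
   the blocks A^T B and A^T C only see the column sums of S_r (all 2^(r-1)),
   B^T B = 2 G, B^T C = G + G F and C^T C = G + F G F.  The pattern
   K = J + I (x) P is fixed by conjugation with the pair swap F and satisfies
   K + K F = 2 J, so the invariant G = 2^(r-2) K, together with the column
   sums, propagates by induction on r. *)

Definition swap_pair (b : nat) : nat := if odd b then b.-1 else b.+1.

Lemma divn2_swap_pair b : (swap_pair b %/ 2 = b %/ 2)%N.
Proof. rewrite /swap_pair; case: ifP => ?; lia. Qed.

Lemma odd_swap_pair b : odd (swap_pair b) = ~~ odd b.
Proof.
by rewrite /swap_pair; case: b => [|b] //=; case: ifP => /=; [move/negbTE|move/negbFE] => ->.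
Qed.

Lemma eq_swap_pair a b :
  (a == swap_pair b) = (a %/ 2 == b %/ 2)%N && (odd a != odd b).
Proof. rewrite /swap_pair; case: ifP => ?; do 2?case: eqP => ? //=; lia. Qed.

Lemma swap_pair_lt n b : ~~ odd n -> (b < n)%N -> (swap_pair b < n)%N.
Proof. rewrite /swap_pair; case: ifP => ?; lia. Qed.

Lemma odd_c r : ~~ odd (c r).
Proof. by rewrite -(chalf_eq r) oddM andbF. Qed.

Lemma castmx_mulmx_tr (R : pzRingType) m m' n n' p p' (em : m = m')
    (en : n = n') (ep : p = p') (M : 'M[R]_(m, n)) (N : 'M[R]_(m, p)) :
  (castmx (em, en) M)^T *m castmx (em, ep) N = castmx (en, ep) (M^T *m N).
Proof. by case: m' / em; case: n' / en; case: p' / ep; rewrite !castmx_id. Qed.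

Lemma gram_row_mx (R : comPzRingType) m n1 n2 (X : 'M[R]_(m, n1)) (Y : 'M[R]_(m, n2)) :
  (row_mx X Y)^T *m row_mx X Y =
  block_mx (X^T *m X) (X^T *m Y) (X^T *m Y)^T (Y^T *m Y).
Proof. by rewrite tr_row_mx mul_col_row trmx_mul trmxK. Qed.

Lemma scalemx_castmx (R : pzSemiRingType) m m' n n' (e : (m = m') * (n = n')) (a : R)
    (M : 'M[R]_(m, n)) :
  a *: castmx e M = castmx e (a *: M).
Proof. by case: e => em en; case: m' / em; case: n' / en; rewrite !castmx_id. Qed.

Section PairPattern.
Variable R : numFieldType.

(* J + I (x) P, indexed by the column numbers themselves so that it commutes
   with casts and with block splittings at even positions. *)
Definition pairmx n : 'M[R]_n :=
  \matrix_(i < n, j < n)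
    if (i %/ 2 == j %/ 2)%N then (if odd i == odd j then 2 else 0) else 1.

Lemma castmx_pairmx m n (e : m = n) : castmx (e, e) (pairmx m) = pairmx n.
Proof. by case: n / e; rewrite castmx_id. Qed.

Lemma pairmx_block m n : ~~ odd m ->
  pairmx (m + n) = block_mx (pairmx m) (const_mx 1) (const_mx 1) (pairmx n).
Proof.
move=> even_m; have m2 : (m = m %/ 2 * 2)%N by apply/esym/eqP; rewrite -dvdn_eq dvdn2.
rewrite -[LHS]submxK; congr block_mx; apply/matrixP=> i j; rewrite !mxE //=.
- by rewrite ifN //; apply/eqP; have := ltn_ord i; lia.
- by rewrite ifN //; apply/eqP; have := ltn_ord j; lia.
- by rewrite m2 !divnMDl // !oddD oddM andbF eqn_add2l.
Qed.

Lemma pairmx2 : pairmx 2 = 2%:M.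
Proof. by apply/matrixP=> i j; rewrite !mxE; case: i j => [[|[|//]]] ? [[|[|//]]]. Qed.

Lemma Jmx_add_tens_Pmx m n (e : (m * 2 = n)%N) :
  Jmx R n + castmx (e, e) (1%:M *t Pmx R) = pairmx n.
Proof.
case: n / e; apply/matrixP=> i j; rewrite castmx_id !mxE /= -!val_eqE /= !modn2.
by case: (_ == _)%N; case: (odd i); case: (odd j) => /=; ring.
Qed.

Variable q : nat.

Definition swap_ord (i : 'I_(c q)) : 'I_(c q) :=
  Ordinal (swap_pair_lt (odd_c q) (ltn_ord i)).

Lemma FmxE i j : Fmx R q i j = (i == swap_ord j)%:R.
Proof.
rewrite /Fmx castmxE !mxE /= -!val_eqE /= eq_swap_pair !modn2.
by case: (_ == _)%N; case: (odd i); case: (odd j); rewrite /= ?mulr0 ?mulr1.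
Qed.

Lemma mulmx_FmxE m (X : 'M[R]_(m, c q)) i j : (X *m Fmx R q) i j = X i (swap_ord j).
Proof.
rewrite mxE (bigD1 (swap_ord j)) //= FmxE eqxx mulr1 big1 ?addr0 // => k /negbTE.
by rewrite FmxE => ->; rewrite mulr0.
Qed.

Lemma trmx_Fmx : (Fmx R q)^T = Fmx R q.
Proof.
apply/matrixP=> i j; rewrite mxE !FmxE -!val_eqE /= !eq_swap_pair.
by rewrite [(j %/ 2 == _)%N]eq_sym [odd j == _]eq_sym.
Qed.

Lemma mul_Fmx_mxE n (Y : 'M[R]_(c q, n)) i j : (Fmx R q *m Y) i j = Y (swap_ord i) j.
Proof.
have -> : Fmx R q *m Y = (Y^T *m Fmx R q)^T by rewrite trmx_mul trmx_Fmx trmxK.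
by rewrite mxE mulmx_FmxE mxE.
Qed.

Lemma const_mx_mulFmx m (x : R) : const_mx x *m Fmx R q = const_mx x :> 'M_(m, c q).
Proof. by apply/matrixP=> i j; rewrite mulmx_FmxE !mxE. Qed.

Lemma pairmx_add_mulFmx : pairmx (c q) + pairmx (c q) *m Fmx R q = const_mx 2.
Proof.
apply/matrixP=> i j; rewrite mxE mulmx_FmxE !mxE divn2_swap_pair odd_swap_pair.
by case: (_ == _)%N; case: (odd i); case: (odd j) => /=; rewrite ?addr0 ?add0r.
Qed.

Lemma Fmx_pairmx_Fmx : Fmx R q *m pairmx (c q) *m Fmx R q = pairmx (c q).
Proof.
apply/matrixP=> i j; rewrite mulmx_FmxE mul_Fmx_mxE !mxE /=.
by rewrite !divn2_swap_pair !odd_swap_pair; case: (odd i); case: (odd j).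
Qed.

End PairPattern.

Lemma ones_gram (R : numFieldType) q : (ones R q)^T *m ones R q = (2 ^ q)%:R%:M.
Proof.
rewrite [LHS]mx11_scalar mxE; under eq_bigr do rewrite !mxE mulr1.
by rewrite sumr_const card_ord.
Qed.

Section NextGram.
Variables (R : numFieldType) (q : nat) (S : 'M[R]_(2 ^ q, c q)) (a : R).
Hypothesis gramS : S^T *m S = a *: pairmx R (c q).
Hypothesis colsumS : (ones R q)^T *m S = const_mx (2 * a).
Hypothesis rowsS : (2 ^ q)%:R = 4%:R * a.

Let A := block_mx (ones R q) 0 0 (ones R q).
Let B := col_mx S S.
Let C := col_mx S (S *m Fmx R q).
Let next := castmx (rowS_eq q, cS_eq q) (row_mx A (row_mx B C)).

Lemma gram_next : next^T *m next = (2 * a) *: pairmx R (c q.+1).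
Proof.
rewrite castmx_mulmx_tr -(castmx_pairmx _ (cS_eq q)) scalemx_castmx; congr castmx.
have gramA : A^T *m A = (2 * a) *: pairmx R 2.
  rewrite /A tr_block_mx mulmx_block !trmx0 !mul0mx !mulmx0 !addr0 !add0r.
  by rewrite ones_gram -scalar_mx_block pairmx2 scale_scalar_mx rowsS; congr _%:M; ring.
have colsumA : A^T *m row_mx B C = const_mx (2 * a).
  rewrite mul_mx_row /A tr_block_mx !mul_block_col !trmx0 !mul0mx !addr0 !add0r.
  by rewrite mulmxA colsumS const_mx_mulFmx !col_mx_const row_mx_const.
have crossBC : B^T *m C = const_mx (2 * a).
  rewrite /B /C tr_col_mx mul_row_col mulmxA gramS -scalemxAl -scalerDr.
  by rewrite pairmx_add_mulFmx scalemx_const mulrC.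
have gramBC : (row_mx B C)^T *m row_mx B C = (2 * a) *: pairmx R (c q + c q).
  rewrite gram_row_mx pairmx_block ?odd_c // scale_block_mx !scalemx_const mulr1.
  rewrite crossBC trmx_const mulr_natl mulr2n scalerDl; congr block_mx.
  - by rewrite /B tr_col_mx mul_row_col gramS.
  - rewrite /C tr_col_mx mul_row_col trmx_mul trmx_Fmx -mulmxA (mulmxA S^T) gramS.
    by rewrite -scalemxAl -scalemxAr mulmxA Fmx_pairmx_Fmx.
rewrite gram_row_mx pairmx_block // scale_block_mx !scalemx_const mulr1.
by rewrite gramA colsumA trmx_const gramBC.
Qed.

Lemma colsum_next : (ones R q.+1)^T *m next = const_mx (2 * (2 * a)).
Proof.
have -> : ones R q.+1 = castmx (rowS_eq q, erefl 1%N) (col_mx (ones R q) (ones R q)).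
  by rewrite /ones col_mx_const castmx_const.
rewrite castmx_mulmx_tr -(castmx_const (erefl 1%N, cS_eq q)); congr castmx.
have ones11 : (2 ^ q)%:R%:M = const_mx (4%:R * a) :> 'M[R]_1.
  by rewrite rowsS [RHS]mx11_scalar mxE.
rewrite tr_col_mx !mul_mx_row /A mul_row_block !mulmx0 addr0 add0r ones_gram ones11.
rewrite /B /C !mul_row_col mulmxA colsumS const_mx_mulFmx -raddfD /=.
have -> : 2 * a + 2 * a = 4%:R * a by ring.
have -> : 2 * (2 * a) = 4%:R * a by ring.
by rewrite !row_mx_const.
Qed.

End NextGram.

Lemma two_exprzS (R : numFieldType) (n : nat) :
  2%:R * (2%:R : R) ^ (n%:Z - 2%:Z) = 2%:R ^ (n.+1%:Z - 2%:Z).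
Proof.
have two_unit : (2%:R : R) \is a GRing.unit by rewrite unitfE pnatr_eq0.
by rewrite -[X in X * _]expr1z -exprzDr //; congr (_ ^ _); lia.
Qed.

Lemma natr_exp2 (R : numFieldType) (n : nat) :
  (2 ^ n)%:R = 4%:R * (2%:R : R) ^ (n%:Z - 2%:Z).
Proof.
have two_unit : (2%:R : R) \is a GRing.unit by rewrite unitfE pnatr_eq0.
have -> : (4%:R : R) = 2%:R ^ 2%:Z by rewrite -exprnP expr2 -natrM.
by rewrite -exprzDr // natrX exprnP; congr (_ ^ _); lia.
Qed.

Lemma Smx_gram_colsum (R : numFieldType) (p : nat) (a := (2%:R : R) ^ (p.+1%:Z - 2%:Z)) :
  (Smx R p.+1)^T *m Smx R p.+1 = a *: pairmx R (c p.+1) /\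
  (ones R p.+1)^T *m Smx R p.+1 = const_mx (2 * a).
Proof.
elim: p @a => [|p [gramS colsumS]] a.
  have half : 2 * a = 1 by rewrite two_exprzS.
  have -> : Smx R 1 = castmx (erefl (2 ^ 1)%N, c1_eq) 1%:M by [].
  split.
    rewrite castmx_mulmx_tr trmx1 mul1mx -(castmx_pairmx _ c1_eq) scalemx_castmx.
    by rewrite pairmx2 scale_scalar_mx mulrC half.
  rewrite -[ones R 1](castmx_id (erefl, erefl)) castmx_mulmx_tr mulmx1.
  by rewrite /ones trmx_const castmx_const half.
rewrite /a -two_exprzS.
have rowsS := natr_exp2 R p.+1.
exact: conj (gram_next gramS colsumS rowsS) (colsum_next colsumS rowsS).
Qed.

Theorem lemma4p3 (R : numFieldType) (r : nat) (hr : (0 < r)%N) :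
  (Smx R r)^T *m Smx R r =
  (2%:R : R) ^ (r%:Z - 2%:Z) *:
    (Jmx R (c r) + castmx (chalf_eq r, chalf_eq r)
                     ((1%:M : 'M[R]_((c r)./2)) *t Pmx R)).
Proof.
case: r hr => // p _.
by rewrite Jmx_add_tens_Pmx; case: (Smx_gram_colsum R p).
Qed.
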